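(* Let $\mathcal A=(Q,\Sigma,\delta,\rho)$ be a connected bireversible Mealy automaton whose labeled orbit tree $\mathfrak t(\mathcal A)$ has no active self-liftable branch, and let $\mathfrak j$ be a jungle tree with trunk of length $n$. For a $\mathfrak j$-word $\mathbf u$ with $|\mathbf u|<n$, the number of $\sim$-classes of stems containing a stem with prefix $\mathbf u$ depends only on $|\mathbf u|$: any two $\mathfrak j$-words of the same length $<n$ have the same number of such classes.
   Context: Mealy automata. A Mealy automaton is $\mathcal A=(Q,\Sigma,\delta,\rho)$ with $Q,\Sigma$ finite non-empty sets, $\delta=(\delta_i\colon Q\to Q)_{i\in\Sigma}$, $\rho=(\rho_x\colon\Sigma\to\Sigma)_{x\in Q}$; transitions $x\xrightarrow{i\mid\rho_x(i)}\delta_i(x)$. Invertible: each $\rho_x$ a permutation of $\Sigma$; reversible: each $\delta_i$ a permutation of $Q$; bireversible: invertible, reversible, and for each $j\in\Sigma$ the map $x\mapsto\delta_{\rho_x^{-1}(j)}(x)$ is a permutation of $Q$. Connected: the directed graph on $Q$ with edges $x\to\delta_i(x)$ is connected. Extensions: $\rho_x(i\mathbf s)=\rho_x(i)\rho_{\delta_i(x)}(\mathbf s)$; $\rho_{x_1\cdots x_m}=\rho_{x_m}\circ\cdots\circ\rho_{x_1}$; $\delta_i(x\mathbf u)=\delta_i(x)\delta_{\rho_x(i)}(\mathbf u)$ on $Q^*$, $\delta_{i_1\cdots i_m}=\delta_{i_m}\circ\cdots\circ\delta_{i_1}$. The connected components of $\mathcal A^n$ (stateset $Q^n$, transitions $\mathbf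 u\xrightarrow{i\mid\rho_{\mathbf u}(i)}\delta_i(\mathbf u)$) are, for reversible $\mathcal A$, the orbits of $Q^n$ under the maps $\delta_{\mathbf s}$. Orbit tree $\mathfrak t(\mathcal A)$: vertices at level $n\ge0$ are the connected components of $\mathcal A^n$; an edge from the component of $\mathbf u\in Q^n$ to that of $\mathbf ux$ for all $\mathbf u,x$; edge $C\to D$ labeled $\#D/\#C$. $\top,\bot$ = first/last vertex of a downward path; level of an edge/path = level of its top vertex. A word of $Q^*\cup Q^\omega$ represents the initial path through the components of its prefixes. Edge $e$ is liftable to $f$ if every word of $\bot(e)$ has a suffix in $\bot(f)$; paths are liftable if corresponding edges are. $f$ is a legitimate child of $e$ if $\top(f)=\bot(e)$ and $f$ is liftable to $e$. A path/subtree $\mathfrak s$ is $k$-self-liftable if for all $i\ge0$ every path in $\mathfrak s$ starting at level $i+k$ is liftable to a path in $\mathfrak s$ starting at level $i$; self-liftable if $k$-self-liftable for some $k>0$. A branch (infinite initial path) is active if its labels are not eventually all $1$. Jungle trees: for a finite 1-self-liftable initial path $\mathbf e$ of length $n$ whose last edge has at least two legitimate children, all labeled $1$, $\mathfrak j(\mathbf e)$ consists of $\mathbf e$ plus all edges descending from $\bot(\mathbf e)$ that are liftable to the last edge of $\mathbf e$. Stems: the words of $\bot(\mathbf e)\subseteq Q^n$. A $\mathfrak j$-word is a word representing an initial path of $\mathfrak j$. For stems $\mathbf u,\mathbf v$: $\mathbf u\sim\mathbf v$ iff there is $\mathbf s\in Q^*$ such that $\mathbf{usv}$ is a $\mathfrak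 j$-word and $\rho_{\mathbf{us}}$ is the identity of $\Sigma^*$; $\sim$ is an equivalence relation. *)

From mathcomp Require Import all_boot.
From mathcomp Require Import boolp.

Set Implicit Arguments.
Unset Strict Implicit.
Unset Printing Implicit Defensive.

Section Mealy.
(* A Mealy automaton (Q, S, delta, rho): transitions x --i|rho x i--> delta i x. *)
Context {Q S : finType} (delta : S -> Q -> Q) (rho : Q -> S -> S).

Definition invertible := forall x : Q, bijective (rho x).
Definition reversible := forall i : S, bijective (delta i).
Definition bireversible :=
  [/\ invertible, reversible &
      forall j : S, bijective (fun x : Q => delta (finv (rho x) j) x)].

Definition aut_edge (x y : Q) : bool := [exists i, delta i x == y].
Definition connected :=
  forall x y : Q, connect (fun a b => aut_edge a b || aut_edge b a) x y.

Fixpoint rhoW (x : Q) (s : seq S) : seq S :=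
  if s is i :: s' then rho x i :: rhoW (delta i x) s' else [::].
(* rho_{x1...xm} = rho_{xm} o ... o rho_{x1} on S^* *)
Definition rhoQ (u : seq Q) (s : seq S) : seq S :=
  foldl (fun s x => rhoW x s) s u.

Fixpoint deltaW (i : S) (u : seq Q) : seq Q :=
  if u is x :: u' then delta i x :: deltaW (rho x i) u' else [::].

Definition stepn n (u v : n.-tuple Q) : bool := [exists i, deltaW i u == v].

(* compb u v : v lies in the connected component of A^(|u|) containing u *)
Definition compb (u v : seq Q) : bool :=
  (size v == size u) &&
  [exists w : (size u).-tuple Q,
     (val w == v) &&
     connect (fun a b => stepn a b || stepn b a) (in_tuple u) w].

Definition ccard (u : seq Q) : nat :=
  #|[set w : (size u).-tuple Q | compb u (val w)]|.

(* Edges of the orbit tree: the edge with bottom vertex the component of w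
   (|w| >= 1) and top vertex the component of its prefix of length |w|-1.
   Its label #D/#C equals 1 iff ccard w = ccard (take (size w).-1 w). *)

(* edge (represented by) w is liftable to edge w': every word of bot(w) has a
   suffix in bot(w') *)
Definition edge_lift (w w' : seq Q) : Prop :=
  forall v, compb w v -> compb w' (drop (size v - size w') v).

(* The path of length L starting at level i1 through the component of w1
   (|w1| >= i1 + L) is liftable to the path of length L starting at level i2
   through the component of w2: corresponding edges are liftable. *)
Definition path_lift (i1 L : nat) (w1 : seq Q) (i2 : nat) (w2 : seq Q) : Prop :=
  forall j, j < L -> edge_lift (take (i1 + j).+1 w1) (take (i2 + j).+1 w2).

Definition branch (b : nat -> seq Q) : Prop :=
  forall m, size (b m) = m /\ compb (b m) (take m (b m.+1)).

(* active: labels not eventually all 1 *)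
Definition active_branch (b : nat -> seq Q) : Prop :=
  ~ (exists N, forall m, N <= m -> ccard (b m.+1) = ccard (b m)).

Definition k_self_liftable_branch (k : nat) (b : nat -> seq Q) : Prop :=
  forall i L, path_lift (i + k) L (b (i + k + L)) i (b (i + L)).

Definition self_liftable_branch (b : nat -> seq Q) : Prop :=
  exists k, 0 < k /\ k_self_liftable_branch k b.

Definition no_active_self_liftable_branch : Prop :=
  forall b, branch b -> self_liftable_branch b -> ~ active_branch b.

(* Finite initial path (trunk) e of length n = size t, represented by a word t
   of bot(e).  k-self-liftable: every path in e starting at level i+k is
   liftable to the path in e of the same length starting at level i. *)
Definition k_self_liftable_trunk (k : nat) (t : seq Q) : Prop :=
  forall i L, i + k + L <= size t -> path_lift (i + k) L t i t.

(* f (represented by w) is a legitimate child of the last edge of the trunk t: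
   top(f) = bot(e) and f is liftable to the last edge of e. *)
Definition legit_child (t w : seq Q) : Prop :=
  size w = (size t).+1 /\ compb t (take (size t) w) /\ edge_lift w t.

Definition jungle_trunk (t : seq Q) : Prop :=
  [/\ 0 < size t,
      k_self_liftable_trunk 1 t,
      (exists w1 w2, legit_child t w1 /\ legit_child t w2 /\ ~~ compb w1 w2) &
      (forall w, legit_child t w -> ccard w = ccard (take (size t) w))].

(* j(t)-words: words representing initial paths of the jungle tree j(t):
   prefixes of the trunk, or extensions below bot(t) all of whose edges at
   levels >= n are liftable to the last edge of the trunk. *)
Definition jword (t w : seq Q) : Prop :=
  if size w <= size t then is_true (compb (take (size w) t) w)
  else compb t (take (size t) w) /\
       (forall m, size t <= m < size w -> edge_lift (take m.+1 w) t).

(* stems: words of bot(t) *)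
Definition stem (t v : seq Q) : bool := compb t v.

Definition jsim (t u v : seq Q) : Prop :=
  exists s : seq Q, jword t (u ++ s ++ v) /\ forall z : seq S, rhoQ (u ++ s) z = z.

Definition nclasses (t u : seq Q) : nat :=
  #|[set [set w : (size t).-tuple Q | stem t (val w) && `[< jsim t (val v) (val w) >]]
     | v in [set v : (size t).-tuple Q | stem t (val v) && prefix u (val v)]]|.

End Mealy.

From mathcomp Require Import all_boot all_fingroup.
From mathcomp Require Import boolp.

(* Every letter i acts on Q^* by delta_i, and by reversibility this action is a
   permutation of each Q^n preserving components of A^n and prefixes; since
   rho_{us} = id forces the output letter of i along us to be i itself, the
   action also transports ~ (both ways, as a permutation of a finite set has
   finite order).  Hence the number of ~-classes met by stems with prefix u is
   constant along the components of A^{|u|}.  Finally two j-words of the same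
   length < n lie in the component of the corresponding trunk prefix. *)

Set Implicit Arguments.
Unset Strict Implicit.
Unset Printing Implicit Defensive.

Section MealyActions.
Variables (Q S : finType) (delta : S -> Q -> Q) (rho : Q -> S -> S).

Local Notation deltaW := (deltaW delta rho).
Local Notation rhoQ := (rhoQ delta rho).
Local Notation compb := (compb delta rho).
Local Notation jword := (jword delta rho).
Local Notation jsim := (jsim delta rho).
Local Notation nclasses := (nclasses delta rho).

Fixpoint rhoQ1 (i : S) (u : seq Q) : S :=
  if u is x :: u' then rhoQ1 (rho x i) u' else i.

Lemma rhoQ1_cat i u r : rhoQ1 i (u ++ r) = rhoQ1 (rhoQ1 i u) r.
Proof. by elim: u i => [|x u IH] i //=. Qed.

Lemma rhoQ_cons u i z : rhoQ u (i :: z) = rhoQ1 i u :: rhoQ (deltaW i u) z.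
Proof. by elim: u i z => [|x u IH] i z //=. Qed.

Lemma size_deltaW i u : size (deltaW i u) = size u.
Proof. by elim: u i => [|x u IH] i //=; rewrite IH. Qed.

Lemma deltaW_cat i u r : deltaW i (u ++ r) = deltaW i u ++ deltaW (rhoQ1 i u) r.
Proof. by elim: u i => [|x u IH] i //=; rewrite IH. Qed.

Lemma deltaW_take i m u : take m (deltaW i u) = deltaW i (take m u).
Proof. by elim: u i m => [|x u IH] i [|m] //=; rewrite IH. Qed.

Lemma deltaW_inj i : reversible delta -> injective (deltaW i).
Proof.
move=> rev_delta u; elim: u i => [|x u IH] i [|y v] //= [exy euv].
by move: euv; rewrite (bij_inj (rev_delta i) exy) => /IH ->.
Qed.

Lemma prefix_deltaW i u v :
  reversible delta -> prefix (deltaW i u) (deltaW i v) = prefix u v.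
Proof.
move=> rev_delta; rewrite !prefixE size_deltaW deltaW_take.
by rewrite (inj_eq (deltaW_inj rev_delta)).
Qed.

Definition adjn n (a b : n.-tuple Q) := stepn delta rho a b || stepn delta rho b a.

Lemma adjn_connect_sym n : connect_sym (@adjn n).
Proof. by apply: sym_connect_sym => a b; rewrite /adjn orbC. Qed.

Lemma compb_tupleE n (a b : n.-tuple Q) : compb a b = connect (@adjn n) a b.
Proof.
case: a => s s_n; have size_s : size s = n by apply/eqP.
subst n.
have -> : Tuple s_n = in_tuple s by exact: val_inj.
rewrite /compb /= size_tuple eqxx /=.
apply/existsP/idP => [[w /andP[/eqP w_b]]|ab]; last by exists b; rewrite eqxx.
by have -> : w = b by exact: val_inj.
Qed.

Lemma compb_size u v : compb u v -> size v = size u.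
Proof. by case/andP => /eqP. Qed.

Lemma seq_tuple n (v : seq Q) : size v = n -> {tv : n.-tuple Q | val tv = v}.
Proof. by move=> v_n; exists (Tuple (introT eqP v_n)). Qed.

Lemma compb_seqE u v :
  compb u v -> exists tv : (size u).-tuple Q,
    val tv = v /\ connect (@adjn (size u)) (in_tuple u) tv.
Proof.
move=> uv; have [tv tvE] := seq_tuple (compb_size uv).
by exists tv; rewrite -(compb_tupleE (in_tuple u)) /= tvE.
Qed.

Lemma compb_sym u v : compb u v -> compb v u.
Proof.
case/compb_seqE=> tv [<- uv].
by rewrite (compb_tupleE tv (in_tuple u)) adjn_connect_sym.
Qed.

Lemma compb_trans u v w : compb u v -> compb v w -> compb u w.
Proof.
move=> uv vw; have v_u := compb_size uv.
have [tv tvE] := seq_tuple v_u; have [tw twE] := seq_tuple (etrans (compb_size vw) v_u).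
move: uv vw; rewrite -tvE -twE.
rewrite (compb_tupleE (in_tuple u) tv) (compb_tupleE tv tw) (compb_tupleE (in_tuple u) tw).
exact: connect_trans.
Qed.

Lemma compb_deltaW i u : compb u (deltaW i u).
Proof.
have [tv tvE] := seq_tuple (size_deltaW i u).
rewrite -tvE (compb_tupleE (in_tuple u) tv) connect1 //.
by apply/orP; left; apply/existsP; exists i; rewrite tvE.
Qed.

Lemma compb_deltaWr t i v : compb t (deltaW i v) = compb t v.
Proof.
apply/idP/idP => tv; last exact: compb_trans tv (compb_deltaW _ _).
exact: compb_trans tv (compb_sym (compb_deltaW _ _)).
Qed.

Lemma jword_prefix t u :
  jword t u -> size u <= size t -> compb (take (size u) t) u.
Proof. by move=> + le_ut; rewrite /jword le_ut. Qed.

Lemma jword_deltaW t i w : jword t w -> jword t (deltaW i w).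
Proof.
rewrite /jword size_deltaW; case: ifP => _; first by rewrite compb_deltaWr.
case=> tw lift_w; split; first by rewrite deltaW_take compb_deltaWr.
move=> m m_range v; rewrite deltaW_take => wv.
exact/(lift_w m m_range)/(compb_trans (compb_deltaW _ _) wv).
Qed.

Lemma jsim_deltaW t i v w : jsim t v w -> jsim t (deltaW i v) (deltaW i w).
Proof.
case=> s [jw_vsw rho_vs_id].
have fix_i : rhoQ1 i (v ++ s) = i by have := rho_vs_id [:: i]; rewrite rhoQ_cons => -[].
exists (deltaW (rhoQ1 i v) s); split.
  by have := jword_deltaW i jw_vsw; rewrite !deltaW_cat -rhoQ1_cat fix_i.
by move=> z; have := rho_vs_id (i :: z); rewrite rhoQ_cons fix_i deltaW_cat => -[].
Qed.

Section LetterPermutation.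
Variables (t : seq Q) (i : S).
Hypothesis rev_delta : reversible delta.

Local Notation n := (size t).

Definition deltaT (a : n.-tuple Q) : n.-tuple Q :=
  Tuple (introT eqP (etrans (size_deltaW i a) (size_tuple a))).

Lemma deltaT_inj : injective deltaT.
Proof. by move=> a b /(congr1 val) /(deltaW_inj rev_delta) /val_inj. Qed.

Definition deltaP : {perm n.-tuple Q} := perm deltaT_inj.

Lemma deltaPE a : val (deltaP a) = deltaW i a.
Proof. by rewrite permE. Qed.

Lemma jsim_deltaP a b : `[< jsim t (deltaP a) (deltaP b) >] = `[< jsim t a b >].
Proof.
have iterE k c : val ((deltaP ^+ k)%g c) = iter k (deltaW i) (val c).
  by elim: k c => [|k IH] c; rewrite ?perm1 // expgSr permM deltaPE IH.
apply/asboolP/asboolP => [|ab]; last by rewrite !deltaPE; exact: jsim_deltaW.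
have iter_jsim k v w : jsim t v w -> jsim t (iter k (deltaW i) v) (iter k (deltaW i) w).
  by elim: k => [|k IH] //= /IH /jsim_deltaW.
move/(iter_jsim #[deltaP]%g.-1); rewrite !deltaPE -!iterSr -!iterE prednK ?order_gt0 //.
by rewrite expg_order !perm1.
Qed.

Lemma nclasses_deltaW u : nclasses t (deltaW i u) = nclasses t u.
Proof.
pose cls (v : n.-tuple Q) := [set w : n.-tuple Q | stem delta rho t w && `[< jsim t v w >]].
pose stems u := [set v : n.-tuple Q | stem delta rho t v && prefix u v].
have stemsE : stems (deltaW i u) = deltaP @: stems u.
  apply/setP => v; rewrite -(permKV deltaP v) mem_imset; last exact: perm_inj.
  by rewrite !inE /stem deltaPE compb_deltaWr prefix_deltaW.
have clsE v : cls (deltaP v) = deltaP @: cls v.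
  apply/setP => w; rewrite -(permKV deltaP w) mem_imset; last exact: perm_inj.
  by rewrite !inE /stem jsim_deltaP deltaPE compb_deltaWr.
rewrite /nclasses; change (#|cls @: stems (deltaW i u)| = #|cls @: stems u|).
rewrite stemsE -imset_comp (eq_imset _ clsE).
rewrite (imset_comp (fun X : {set n.-tuple Q} => deltaP @: X) cls).
exact: card_imset (imset_inj (@perm_inj _ deltaP)).
Qed.

End LetterPermutation.

Lemma nclasses_connect t n (a b : n.-tuple Q) :
  reversible delta -> connect (@adjn n) a b -> nclasses t a = nclasses t b.
Proof.
move=> rev_delta /connectP [p p_path ->].
elim: p a p_path => [|c p IH] a //= /andP [ac /IH <-].
have step_eq (x y : n.-tuple Q) : stepn delta rho x y -> nclasses t x = nclasses t y.
  by case/existsP => j /eqP <-; rewrite nclasses_deltaW.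
by case/orP: ac => [/step_eq|/step_eq ->].
Qed.

Lemma nclasses_compb t u v :
  reversible delta -> compb u v -> nclasses t u = nclasses t v.
Proof.
by move=> rev_delta /compb_seqE [tv [<-]] /(nclasses_connect t rev_delta).
Qed.

End MealyActions.

Theorem corollary5p18 (Q S : finType) (delta : S -> Q -> Q) (rho : Q -> S -> S)
    (t : seq Q) (n : nat) :
  connected delta ->
  bireversible delta rho ->
  no_active_self_liftable_branch delta rho ->
  jungle_trunk delta rho t ->
  size t = n ->
  forall u u' : seq Q,
    jword delta rho t u -> jword delta rho t u' ->
    size u = size u' -> size u < n ->
    nclasses delta rho t u = nclasses delta rho t u'.
Proof.
move=> _ [_ rev_delta _] _ _ <- u u' jw_u jw_u' same_size short_u.
have le_ut : size u <= size t := ltnW short_u.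
have := jword_prefix jw_u'; rewrite -same_size => /(_ le_ut) comp_u'.
apply: nclasses_compb rev_delta _.
exact: compb_trans (compb_sym (jword_prefix jw_u le_ut)) comp_u'.
Qed.
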